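(* Let $f:\mathbb{R}^n\to\mathbb{R}^n$ be Borel measurable, $\mathbf{X}\subset\mathbb{R}^n$ compact, $\alpha\in(0,1)$, $\lambda$ a Borel probability measure on $\mathbf{X}$ with support $\mathbf{X}$, $\boldsymbol\beta=(\beta_1,\dots,\beta_N)^\top$ a vector of Lipschitz continuous functions on $\mathbb{R}^n$, $\{(x_i,x_i^+)\}_{i=1}^K$ data with $x_i\in\mathbf{X}$ and $x_i^+=f(x_i)$, and $\{z_i\}_{i=1}^{K'}\subset\mathbf{X}$ further points. Let $\mathbf{c}_{N,K}$ be an optimal solution of the linear program \[ \sup_{\mathbf{c}\in\mathbb{R}^N}\ \mathbf{z}^\top\mathbf{c}\quad\text{s.t.}\quad \boldsymbol\beta(x_i)^\top\mathbf{c}\le \mathrm{dist}_{\mathbf{X}}(x_i^+)+\alpha\,\boldsymbol\beta(\mathrm{proj}_{\mathbf{X}}(x_i^+))^\top\mathbf{c}\ \ (i=1,\dots,K),\qquad -1\le\boldsymbol\beta(z_i)^\top\mathbf{c}\le(1-\alpha)^{-1}\ \ (i=1,\dots,K'), \] where $\mathbf{z}=\int_{\mathbf{X}}\boldsymbol\beta(x)\,d\lambda(x)$, and let $v_{N,K}(x)=\boldsymbol\beta(x)^\top\mathbf{c}_{N,K}$. Define $E:\mathbf{X}\to\mathbb{R}$ by $E(x)=v_{N,K}(x)-\mathrm{dist}_{\mathbf{X}}(f(x))-\alpha\,v_{N,K}(\mathrm{proj}_{\mathbf{X}}(f(x)))$. Then \[ \big\{x\in\mathbf{X}: v_{N,K}(x)\le(1-\alpha)^{-1}\sup_{z\in\mathbf{X}}E(z)\big\}\supset\mathbf{X}_\infty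 . \]
   Context: The maximum positively invariant set is $\mathbf{X}_\infty=\{x\in\mathbf{X}: f^{(k)}(x)\in\mathbf{X}\text{ for all } k\in\mathbb{N}_0\}$, where $f^{(k)}$ is the $k$-fold composition of $f$. $\mathrm{proj}_{\mathbf{X}}(x)\in\operatorname{arg\,min}_{y\in\mathbf{X}}\|x-y\|_2$ is the Euclidean projection onto $\mathbf{X}$ (a fixed measurable selection when non-unique), and $\mathrm{dist}_{\mathbf{X}}(x)=\min\{\min_{y\in\mathbf{X}}\|x-y\|_2,1\}$. *)

From HB Require Import structures.
From mathcomp Require Import all_boot all_order all_algebra.
From mathcomp Require Import all_classical all_reals all_analysis.
Set Implicit Arguments. Unset Strict Implicit. Unset Printing Implicit Defensive.
Import Order.TTheory GRing.Theory Num.Theory.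
Import numFieldNormedType.Exports.
Local Open Scope classical_set_scope.
Local Open Scope ring_scope.

Definition BorelRn (R : realType) (n : nat) :=
  g_sigma_algebraType (@open 'rV[R]_n).

(* Euclidean norm ||x||_2 on R^n (the library's norm on 'rV is the max norm). *)
Definition enorm (R : realType) (n : nat) (x : 'rV[R]_n) : R :=
  Num.sqrt (\sum_(i < n) x ord0 i ^+ 2).

Definition distX (R : realType) (n : nat) (X : set 'rV[R]_n) (x : 'rV[R]_n) : R :=
  Num.min (inf [set enorm (x - y) | y in X]) 1.

Definition is_projX (R : realType) (n : nat) (X : set 'rV[R]_n)
  (p : 'rV[R]_n -> 'rV[R]_n) : Prop :=
  forall x, X (p x) /\ (forall y, X y -> enorm (x - p x) <= enorm (x - y)).

Definition lipschitz_eucl (R : realType) (n : nat) (g : 'rV[R]_n -> R) : Prop :=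
  exists L : R, forall x y, `|g x - g y| <= L * enorm (x - y).

Definition msupport (R : realType) (n : nat)
  (mu : {measure set (BorelRn R n) -> \bar R}) : set 'rV[R]_n :=
  [set x | forall U : set 'rV[R]_n, open U -> U x -> (0 < mu U)%E].

Definition Xinf (R : realType) (n : nat) (f : 'rV[R]_n -> 'rV[R]_n)
  (X : set 'rV[R]_n) : set 'rV[R]_n :=
  [set x | X x /\ forall k : nat, X (iter k f x)].

Definition bdot (R : realType) (n N : nat) (beta : 'I_N -> 'rV[R]_n -> R)
  (c : 'I_N -> R) (x : 'rV[R]_n) : R := \sum_(j < N) beta j x * c j.

Definition lp_feasible (R : realType) (n N K K' : nat) (f : 'rV[R]_n -> 'rV[R]_n)
  (X : set 'rV[R]_n) (proj : 'rV[R]_n -> 'rV[R]_n) (alpha : R)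
  (beta : 'I_N -> 'rV[R]_n -> R) (xs : 'I_K -> 'rV[R]_n) (zs : 'I_K' -> 'rV[R]_n)
  (c : 'I_N -> R) : Prop :=
  (forall i, bdot beta c (xs i) <= distX X (f (xs i)) + alpha * bdot beta c (proj (f (xs i))))
  /\ (forall i, -1 <= bdot beta c (zs i) /\ bdot beta c (zs i) <= (1 - alpha)^-1).

(** Along the orbit x_k := f^k x of a point of X_oo every x_{k+1}
lies in X, so dist_X (f x_k) = 0 and proj_X (f x_k) = x_{k+1}; writing
S := sup_X E, this gives v x_k <= S + alpha v x_{k+1}.  Shifting by the fixed
point S / (1 - alpha) of y |-> S + alpha y yields
v x - S/(1-alpha) <= alpha^k (v x_k - S/(1-alpha)), and the right-hand side
tends to 0 because v is bounded on the compact set X (it is a combination of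
Lipschitz functions). Neither the LP nor the measure plays any role. *)
From HB Require Import structures.
From mathcomp Require Import all_boot all_order all_algebra.
From mathcomp Require Import all_classical all_reals all_analysis.
From mathcomp Require Import ring lra.
Import Order.TTheory GRing.Theory Num.Theory.
Import numFieldNormedType.Exports.
Local Open Scope classical_set_scope.
Local Open Scope ring_scope.

Lemma normr_coord_le_mx_norm (K : realDomainType) m n (x : 'M[K]_(m, n)) i j :
  `|x i j| <= `|x|.
Proof.
change (`|x i j| <= mx_norm x); rewrite mx_normrE.
exact: (le_bigmax 0 (fun ij : 'I_m * 'I_n => `|x ij.1 ij.2|) (i, j)).
Qed.

Section euclidean_norm.
Context {R : realType} {n : nat}.
Implicit Types x : 'rV[R]_n.

Lemma enorm_ge0 x : 0 <= enorm x.
Proof. exact: sqrtr_ge0. Qed.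

Lemma enorm_eq0 x : (enorm x == 0) = (x == 0).
Proof.
have sq_ge0 i : 0 <= x ord0 i ^+ 2 by exact: sqr_ge0.
rewrite /enorm sqrtr_eq0 le_eqVlt ltNge sumr_ge0 ?orbF // psumr_eq0 //.
apply/allP/eqP => [x0|-> i _]; last by rewrite /= mxE expr0n.
apply/rowP => i; rewrite mxE; apply/eqP.
by rewrite -sqrf_eq0; apply: x0; rewrite mem_index_enum.
Qed.

Lemma enorm0 : enorm (0 : 'rV[R]_n) = 0.
Proof. by apply/eqP; rewrite enorm_eq0. Qed.

Lemma enorm_le_mx_norm x : enorm x <= Num.sqrt n%:R * `|x|.
Proof.
rewrite /enorm -(ger0_norm (normr_ge0 x)) -sqrtr_sqr -sqrtrM ?ler0n //.
rewrite ler_wsqrtr //.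
apply: (@le_trans _ _ (\sum_(i < n) `|x| ^+ 2)); last first.
  by rewrite sumr_const card_ord mulr_natl.
apply: ler_sum => i _; rewrite -real_normK ?num_real // lerXn2r ?nnegrE //.
exact: normr_coord_le_mx_norm.
Qed.

Lemma distX_ge0 (X : set 'rV[R]_n) x : 0 <= distX X x.
Proof.
rewrite /distX le_min ler01 andbT.
have [->|/set0P [y Xy]] := eqVneq X set0; first by rewrite image_set0 inf0.
apply: lb_le_inf; first by exists (enorm (x - y)), y.
by move=> _ [z _ <-]; exact: enorm_ge0.
Qed.

Lemma distX_eq0 (X : set 'rV[R]_n) x : X x -> distX X x = 0.
Proof.
move=> Xx; apply/eqP; rewrite eq_le distX_ge0 andbT /distX ge_min; apply/orP; left.
apply: ge_inf; last by exists x; rewrite // subrr enorm0.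
by exists 0 => _ [z _ <-]; exact: enorm_ge0.
Qed.

Lemma projX_id {X : set 'rV[R]_n} {proj} {x : 'rV[R]_n} :
  is_projX X proj -> X x -> proj x = x.
Proof.
move=> hproj Xx; have [_ /(_ x Xx)] := hproj x; rewrite subrr enorm0 => hle.
by apply/esym/eqP; rewrite -subr_eq0 -enorm_eq0 eq_le hle enorm_ge0.
Qed.

Lemma lipschitz_eucl_bounded_on (X : set 'rV[R]_n) (g : 'rV[R]_n -> R) :
  lipschitz_eucl g -> bounded_set X -> exists M, forall x, X x -> `|g x| <= M.
Proof.
move=> [L hL] [P [_ hP]]; exists (`|g 0| + `|L| * (Num.sqrt n%:R * (`|P| + 1))).
move=> x Xx; have hx : `|x| <= `|P| + 1.
  by apply: hP Xx; apply: le_lt_trans (real_ler_norm _) _; rewrite ?num_real ?ltrDl.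
rewrite -[g x](subrK (g 0)) addrC.
apply: le_trans (ler_normD _ _) _; rewrite lerD2l.
apply: le_trans (hL _ _) _; apply: le_trans (real_ler_norm _) _; first exact: num_real.
rewrite normrM (ger0_norm (enorm_ge0 _)) ler_wpM2l //.
apply: le_trans (enorm_le_mx_norm _) _.
by rewrite subr0 ler_wpM2l ?sqrtr_ge0.
Qed.

End euclidean_norm.

Lemma bdot_bounded_on (R : realType) (n N : nat) (X : set 'rV[R]_n)
    (beta : 'I_N -> 'rV[R]_n -> R) (c : 'I_N -> R) :
  (forall j, exists M, forall x, X x -> `|beta j x| <= M) ->
  exists M, forall x, X x -> `|bdot beta c x| <= M.
Proof.
move=> /choice [B hB]; exists (\sum_(j < N) B j * `|c j|) => x Xx.
apply: le_trans (ler_norm_sum _ _ _) _; apply: ler_sum => j _.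
by rewrite normrM ler_wpM2r ?hB.
Qed.

Lemma geometric_bound_le0 (R : realType) (a B d : R) : 0 <= a -> a < 1 ->
  (forall k, d <= a ^+ k * B) -> d <= 0.
Proof.
move=> a0 a1 hd.
have hcvg : (fun k => a ^+ k * B) @ \oo --> 0 * B.
  by apply: cvgM; [apply: cvg_expr; rewrite ger0_norm | exact: cvg_cst].
rewrite mul0r in hcvg; rewrite -(cvg_lim _ hcvg) //.
by apply: limr_ge; [apply/cvg_ex; exists 0 | exact: nearW].
Qed.

Lemma orbit_le_fixed_point (R : realType) (T : Type) (g : T -> T) (v : T -> R)
    (a M S : R) (x : T) : 0 <= a -> a < 1 ->
  (forall k, `|v (iter k g x)| <= M) ->
  (forall k, v (iter k g x) - a * v (iter k.+1 g x) <= S) ->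
  v x <= (1 - a)^-1 * S.
Proof.
move=> a0 a1 hM hS; set t := (1 - a)^-1.
have ht : t * a = t - 1 by rewrite /t; field; rewrite subr_eq0 gt_eqF.
have contract k : v (iter k g x) - t * S <= a * (v (iter k.+1 g x) - t * S).
  have hk := hS k; have atS : a * (t * S) = t * S - S.
    by rewrite mulrA [a * t]mulrC ht mulrBl mul1r.
  rewrite mulrBr atS; lra.
have geom k : v x - t * S <= a ^+ k * (v (iter k g x) - t * S).
  elim: k => [|k IH]; first by rewrite expr0 mul1r.
  by apply: le_trans IH _; rewrite exprSr -mulrA ler_wpM2l ?exprn_ge0.
rewrite -subr_le0; apply: (@geometric_bound_le0 _ a (M + `|t * S|)) => // k.
apply: le_trans (geom k) _; rewrite ler_wpM2l ?exprn_ge0 //.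
apply: lerD; first exact: le_trans (ler_norm _) (hM k).
by rewrite -normrN ler_norm.
Qed.

Theorem lemma4 (R : realType) (n N K K' : nat)
  (f : 'rV[R]_n -> 'rV[R]_n)
  (hf : measurable_fun setT (f : BorelRn R n -> BorelRn R n))
  (X : set 'rV[R]_n) (hX : compact X)
  (alpha : R) (ha0 : 0 < alpha) (ha1 : alpha < 1)
  (lam : probability (BorelRn R n) R) (hsupp : msupport lam = X)
  (beta : 'I_N -> 'rV[R]_n -> R) (hbeta : forall j, lipschitz_eucl (beta j))
  (proj : 'rV[R]_n -> 'rV[R]_n) (hproj : is_projX X proj)
  (hprojm : measurable_fun setT (proj : BorelRn R n -> BorelRn R n))
  (xs : 'I_K -> 'rV[R]_n) (hxs : forall i, X (xs i))
  (zs : 'I_K' -> 'rV[R]_n) (hzs : forall i, X (zs i))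
  (c : 'I_N -> R)
  (hc_feas : lp_feasible f X proj alpha beta xs zs c)
  (hc_opt : forall c' : 'I_N -> R, lp_feasible f X proj alpha beta xs zs c' ->
     \sum_(j < N) Rintegral lam X (beta j) * c' j
       <= \sum_(j < N) Rintegral lam X (beta j) * c j) :
  let v := bdot beta c in
  let E := fun x => v x - distX X (f x) - alpha * v (proj (f x)) in
  Xinf f X `<=` [set x | X x /\ v x <= (1 - alpha)^-1 * sup [set E z | z in X]].
Proof.
move=> v E x [Xx orbitX].
have [M hM] : exists M, forall y, X y -> `|v y| <= M.
  apply: bdot_bounded_on => j.
  by apply: lipschitz_eucl_bounded_on; [exact: hbeta | exact: compact_bounded].
have supE : has_sup [set E z | z in X].
  split; first by exists (E x), x.
  exists (M + alpha * M) => _ [z Xz <-]; rewrite /E.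
  have [Xpz _] := hproj (f z).
  move: (hM z Xz) (hM _ Xpz) (distX_ge0 X (f z)).
  rewrite !ler_norml => /andP[_ vz_le] /andP[vpz_ge _] dist_ge0; nra.
split=> //; apply: (@orbit_le_fixed_point _ _ f v alpha M) => // [|k|k].
- exact: ltW.
- exact: hM.
- have Xfx : X (f (iter k f x)) := orbitX k.+1.
  have := sup_upper_bound supE (ex_intro2 _ _ _ (orbitX k) erefl).
  by rewrite /E distX_eq0 // (projX_id hproj Xfx) subr0.
Qed.
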